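(* Let $S,B\subseteq\{-1,1,*\}^X$ be binary hypothesis classes. For any $\varepsilon\ge0$ and $n\in\mathbb{Z}_{>0}$, $\mathsf{AgnOL}_n(\mathbf{A}_{S,B},\varepsilon)\subseteq\mathsf{CompOL}_n(S,B,\varepsilon)$; that is, any online learner solving agnostic online learning for $\mathbf{A}_{S,B}$ also solves comparative online learning for $(S,B)$ with the same $\varepsilon$.
   Context: Agreement hypotheses: for $s,b:X\to\{-1,1,*\}$, $\mathbf{a}_{s,b}(x)=s(x)$ if $s(x)=b(x)\in\{-1,1\}$, and $\mathbf{a}_{s,b}(x)=*$ otherwise; $\mathbf{A}_{S,B}=\{\mathbf{a}_{s,b}:s\in S,b\in B\}$. An online learner, for each $i=1,\dots,n$, given $(x_1,y_1),\dots,(x_{i-1},y_{i-1})$ and $x_i$, outputs a possibly random $\hat y_i\in\{-1,1\}$; $\mathsf{mistake}(L;(x_i,y_i)_{i=1}^n)=\frac1n\sum_i\Pr[\hat y_i\ne y_i]$ and $\mathsf{mistake}(h;(x_i,y_i)_{i=1}^n)=\frac1n\sum_i\mathbf{1}(h(x_i)\neq y_i)$. $\mathsf{AgnOL}_n(H,\varepsilon)$: online learners with $\mathsf{mistake}(L;\cdot)\le\inf_{h\in H}\mathsf{mistake}(h;\cdot)+\varepsilon$ on every sequence of $n$ points of $X\times\{-1,1\}$. $\mathsf{CompOL}_n(S,B,\varepsilon)$: online learners with $\mathsf{mistake}(L;\cdot)\le\inf_{b\in B}\mathsf{mistake}(b;\cdot)+\varepsilon$ on every sequence satisfying $y_i=s(x_i)$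 for all $i$ for some $s\in S$. *)

From mathcomp Require Import all_boot all_order all_algebra.
Set Implicit Arguments. Unset Strict Implicit. Unset Printing Implicit Defensive.
Import Order.TTheory GRing.Theory Num.Theory.
Local Open Scope ring_scope.

(* Labels {-1, 1, *} encoded as option bool:
   Some true = 1, Some false = -1, None = *.  True labels y_i are in {-1,1},
   encoded as bool (true = 1, false = -1). *)
Definition lab := option bool.
Definition hyp (X : Type) := X -> lab.
Definition hclass (X : Type) := hyp X -> Prop.

Definition agree (X : Type) (s b : hyp X) : hyp X :=
  fun x => match s x, b x with
           | Some u, Some v => if u == v then Some u else None
           | _, _ => None
           end.

Definition agreeClass (X : Type) (S B : hclass X) : hclass X :=
  fun a => exists s b, S s /\ B b /\ a = agree s b.

(* A (possibly randomized) online learner: given the history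
   (x_1,y_1),...,(x_{i-1},y_{i-1}) and x_i, it returns the probability
   Pr[yhat_i = 1] (so Pr[yhat_i = -1] = 1 - that). *)
Definition learner (R : realFieldType) (X : Type) := seq (X * bool) -> X -> R.

Definition valid_learner (R : realFieldType) (X : Type) (L : learner R X) :=
  forall h x, 0 <= L h x <= 1.

Definition prob_mistake (R : realFieldType) (X : Type) (L : learner R X)
  (hist : seq (X * bool)) (x : X) (y : bool) : R :=
  if y then 1 - L hist x else L hist x.

Definition history (X : Type) (n : nat) (z : 'I_n -> X * bool) (i : 'I_n)
  : seq (X * bool) := [seq z j | j : 'I_n <- enum 'I_n & (nat_of_ord j < nat_of_ord i)%N].

Definition mistakeL (R : realFieldType) (X : Type) (n : nat) (L : learner R X)
  (z : 'I_n -> X * bool) : R :=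
  n%:R^-1 * \sum_(i < n) prob_mistake L (history z i) (z i).1 (z i).2.

Definition mistakeH (R : realFieldType) (X : Type) (n : nat) (h : hyp X)
  (z : 'I_n -> X * bool) : R :=
  n%:R^-1 * \sum_(i < n) (h (z i).1 != Some (z i).2)%:R.

Definition AgnOL (R : realFieldType) (X : Type) (n : nat) (H : hclass X)
  (eps : R) (L : learner R X) : Prop :=
  valid_learner L /\
  forall z : 'I_n -> X * bool, forall h, H h ->
    mistakeL L z <= mistakeH R h z + eps.

Definition CompOL (R : realFieldType) (X : Type) (n : nat) (S B : hclass X)
  (eps : R) (L : learner R X) : Prop :=
  valid_learner L /\
  forall z : 'I_n -> X * bool,
    (exists s, S s /\ forall i, s (z i).1 = Some (z i).2) ->
    forall b, B b -> mistakeL L z <= mistakeH R b z + eps.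

From mathcomp Require Import all_boot all_order all_algebra.
Import Order.TTheory GRing.Theory Num.Theory.
Local Open Scope ring_scope.

(* On a sequence labelled by s, the agreement hypothesis a_{s,b} errs exactly
   where b does, so the agnostic guarantee against a_{s,b} is the comparative
   guarantee against b. *)

Lemma agree_neq_label (X : Type) (s b : hyp X) (x : X) (y : bool) :
  s x = Some y -> (agree s b x != Some y) = (b x != Some y).
Proof.
rewrite /agree => ->; case: (b x) => [v|] //.
by case: (y =P v) => [-> | /eqP neq_yv] /=; rewrite ?eqxx // eq_sym neq_yv.
Qed.

Lemma mistakeH_agree {R : realFieldType} {X : Type} {n : nat} {s : hyp X}
  (b : hyp X) {z : 'I_n -> X * bool} :
  (forall i, s (z i).1 = Some (z i).2) ->
  mistakeH R (agree s b) z = mistakeH R b z.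
Proof.
move=> s_labels_z; rewrite /mistakeH; congr (_ * _).
by apply: eq_bigr => i _; rewrite agree_neq_label.
Qed.

Theorem lemma8p8 (R : realFieldType) (X : Type) (S B : hclass X)
  (eps : R) (n : nat) :
  0 <= eps -> (0 < n)%N ->
  forall L : learner R X,
    AgnOL n (agreeClass S B) eps L -> CompOL n S B eps L.
Proof.
move=> _ _ L [validL agnL]; split=> // z [s [Ss s_labels_z]] b Bb.
rewrite -(mistakeH_agree b s_labels_z).
by apply: agnL; exists s, b.
Qed.
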